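(* Let $H_<$ be an ordered graph and let $\delta>0$. There exists a constant $c_2=c_2(H_<,\delta)>0$ such that every ordered graph $G_<$ on $n$ vertices that does not contain $H_<$ as an induced ordered subgraph has a subset $U\subset V(G)$ with $|U|\ge c_2 n$ such that either $\Delta(G[U])\le \delta|U|$ or $\Delta(\overline{G}[U])\le \delta |U|$.
   Context: An ordered graph $G_<$ is a graph with a total ordering $<$ of its vertex set. $H_{<'}$ is an induced ordered subgraph of $G_<$ if there is an injection $\phi:V(H)\to V(G)$ with $u<'v\Rightarrow \phi(u)<\phi(v)$ and $uv\in E(H)\iff\phi(u)\phi(v)\in E(G)$. $G[U]$ is the induced subgraph on $U$, $\overline{G}$ the complement of $G$, and $\Delta$ the maximum degree. *)

From mathcomp Require Import all_boot all_order all_algebra.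
From mathcomp Require Import reals.
Set Implicit Arguments. Unset Strict Implicit. Unset Printing Implicit Defensive.
Import Order.TTheory GRing.Theory Num.Theory.

(* An ordered graph on k vertices: vertex set 'I_k with its natural order,
   edge relation a symmetric irreflexive boolean relation. *)
Definition simple_graph (k : nat) (e : rel 'I_k) : Prop :=
  irreflexive e /\ symmetric e.

Definition induced_ordered_sub (k n : nat) (h : rel 'I_k) (g : rel 'I_n) : Prop :=
  exists phi : 'I_k -> 'I_n,
    (forall u v : 'I_k, (u < v)%N -> (phi u < phi v)%N) /\
    (forall u v : 'I_k, h u v = g (phi u) (phi v)).

Definition deg_in (n : nat) (g : rel 'I_n) (U : {set 'I_n}) (v : 'I_n) : nat :=
  #|[set w in U | g v w]|.

Definition codeg_in (n : nat) (g : rel 'I_n) (U : {set 'I_n}) (v : 'I_n) : nat :=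
  #|[set w in U | (w != v) && ~~ g v w]|.

Definition maxdeg_le (R : realType) (n : nat) (g : rel 'I_n)
    (U : {set 'I_n}) (d : R) : Prop :=
  forall v, v \in U -> ((deg_in g U v)%:R <= d)%R.

Definition comaxdeg_le (R : realType) (n : nat) (g : rel 'I_n)
    (U : {set 'I_n}) (d : R) : Prop :=
  forall v, v \in U -> ((codeg_in g U v)%:R <= d)%R.

(* Cut an H-free ordered graph on X into k consecutive blocks of equal size and
   try to embed H greedily, one vertex per block.  If this fails, there is a
   "thin pair": disjoint A, B with |B| <= k|A| and |B| a fixed fraction of |X|,
   such that every vertex of A has adjacency b to fewer than |B|/q vertices of B
   (b = true: neighbours, b = false: non-neighbours).  Iterating inside B, with a
   Ramsey-style induction on the two target lengths, gives for one colour b a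
   chain A_1, ..., A_r of blocks of size m >= n/c in which every vertex of A_i has
   fewer than m b-neighbours in the later blocks.  The union of the A_i has
   average b-degree at most 3m; deleting the vertices of b-degree above 6m (at
   most half of them, by Markov) leaves at least rm/2 vertices of maximum b-degree
   at most 6m, which is below delta times their number once r >= 12/delta. *)

From mathcomp Require Import all_boot all_order all_algebra.
From mathcomp Require Import reals.
From mathcomp Require Import zify.
Import Order.TTheory GRing.Theory Num.Theory.
Set Implicit Arguments. Unset Strict Implicit. Unset Printing Implicit Defensive.

Lemma card_bigcup_leq (I T : finType) (F : I -> {set T}) :
  #|\bigcup_i F i| <= \sum_i #|F i|.
Proof.
elim/big_ind2: _ => // [|m A p B leAm leBp]; first by rewrite cards0.
exact: leq_trans (leq_card_setU A B) (leq_add leAm leBp).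
Qed.

Lemma exists_notin_bigcup (I T : finType) (A : {set T}) (F : I -> {set T}) :
  0 < #|A| -> (forall i, #|I| * #|F i| < #|A|) ->
  exists2 x, x \in A & forall i, x \notin F i.
Proof.
move=> A_gt0 smallF.
have ltFA : \sum_i #|F i| < #|A|.
  have [i0 _|noI] := pickP (@predT I); last by rewrite big_pred0.
  have I_gt0 : 0 < #|I| by apply/card_gt0P; exists i0.
  rewrite -(prednK A_gt0) ltnS -(leq_pmul2l I_gt0) big_distrr /=.
  rewrite -sum_nat_const; apply: leq_sum => i _.
  by rewrite -ltnS (prednK A_gt0).
have /subsetPn[x xA xF] : ~~ (A \subset \bigcup_i F i).
  apply/negP => /subset_leq_card/leq_trans/(_ (card_bigcup_leq F)).
  by rewrite leqNgt ltFA.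
by exists x => // i; apply: contra xF => xFi; apply/bigcupP; exists i.
Qed.

Lemma double_count (T : finType) (P Q : {set T}) (r : rel T) :
  \sum_(v in P) #|[set w in Q | r v w]| = \sum_(w in Q) #|[set v in P | r v w]|.
Proof.
have cardE (A : {set T}) (p : pred T) : #|[set x in A | p x]| = \sum_(x in A) p x.
  rewrite -sum1_card (eq_bigl (fun x => (x \in A) && p x)) => [|x]; last by rewrite inE.
  by rewrite big_mkcondr /=; apply: eq_bigr => x _; case: (p x).
under eq_bigr do rewrite cardE.
by rewrite exchange_big /=; apply: eq_bigr => w _; rewrite cardE.
Qed.

Definition take_set (T : finType) (m : nat) (A : {set T}) : {set T} :=
  [set x in take m (enum A)].

Lemma take_set_sub (T : finType) m (A : {set T}) : take_set m A \subset A.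
Proof. by apply/subsetP => x; rewrite inE => /mem_take; rewrite mem_enum. Qed.

Lemma card_take_set (T : finType) m (A : {set T}) :
  m <= #|A| -> #|take_set m A| = m.
Proof.
move=> le_mA; rewrite cardsE (card_uniqP _) ?take_uniq ?enum_uniq //.
by rewrite size_take -cardE; case: ltngtP le_mA.
Qed.

Lemma leq_mul2_divn d m : 0 < d -> d <= m -> m <= 2 * d * (m %/ d).
Proof.
move=> d_gt0 le_dm; have := divn_eq m d; have := ltn_pmod m d_gt0.
have : 0 < m %/ d by rewrite divn_gt0.
nia.
Qed.

Definition tail_rel k (h : rel 'I_k.+1) : rel 'I_k :=
  fun x y => h (lift ord0 x) (lift ord0 y).

Lemma simple_graph_tail k (h : rel 'I_k.+1) :
  simple_graph h -> simple_graph (tail_rel h).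
Proof. by case=> hirr hsym; split=> [x|x y]; [apply: hirr | apply: hsym]. Qed.

Section Graph.
Variables (n : nat) (g : rel 'I_n).
Hypotheses (girr : irreflexive g) (gsym : symmetric g).

Definition ordered_blocks k (W : 'I_k -> {set 'I_n}) : Prop :=
  forall i j : 'I_k, i < j -> forall x y, x \in W i -> y \in W j -> x < y.

Lemma ordered_blocks_disjoint k (W : 'I_k -> {set 'I_n}) (i j : 'I_k) :
  ordered_blocks W -> i < j -> [disjoint W i & W j].
Proof.
move=> ordW lt_ij; rewrite disjoint_subset; apply/subsetP => x xi; apply/negP => xj.
by have := ordW _ _ lt_ij _ _ xi xj; rewrite ltnn.
Qed.

Lemma ordered_blocks_of_set k s (X : {set 'I_n}) : k * s <= #|X| ->
  exists W : 'I_k -> {set 'I_n},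
    [/\ ordered_blocks W, forall j, W j \subset X & forall j, #|W j| = s].
Proof.
move=> le_ksX; have [X0|[x0 _]] := set_0Vmem X.
  exists (fun=> set0); split=> [i j _ x y||j]; rewrite ?inE ?sub0set ?cards0 //.
  move: le_ksX; rewrite X0 cards0 leqn0 muln_eq0 => /orP[/eqP k0|/eqP-> //].
  by case: j; rewrite k0.
pose e := [seq x <- ord_enum n | x \in X].
have e_uniq : uniq e := filter_uniq _ (ord_enum_uniq n).
have size_e : size e = #|X|.
  rewrite -(card_uniqP e_uniq); apply: eq_card => x.
  by rewrite mem_filter mem_ord_enum andbT.
have e_sorted : sorted (fun x y : 'I_n => x < y) e.
  apply: sorted_filter; first by move=> ? ? ?; apply: ltn_trans.
  by have := iota_ltn_sorted 0 n; rewrite -val_ord_enum sorted_map.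
have e_idx (j : 'I_k) (i : 'I_s) : j * s + i < size e.
  by rewrite size_e; apply: leq_trans le_ksX; have := ltn_ord i; have := ltn_ord j; nia.
exists (fun j => [set nth x0 e (j * s + i) | i : 'I_s]); split.
- move=> i j lt_ij x y /imsetP[i1 _ ->] /imsetP[j1 _ ->].
  apply: (sorted_ltn_nth (fun _ _ _ => @ltn_trans _ _ _) x0 e_sorted).
  + by rewrite inE e_idx.
  + by rewrite inE e_idx.
  + by have := ltn_ord i1; nia.
- move=> j; apply/subsetP => _ /imsetP[i _ ->].
  by have := mem_nth x0 (e_idx j i); rewrite mem_filter => /andP[].
- move=> j; rewrite card_imset ?card_ord // => i1 i2 /eqP.
  by rewrite nth_uniq ?e_idx // eqn_add2l => /eqP/val_inj.
Qed.

(* For [b = false] this contains [v] itself whenever [v \in B]. *)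
Definition nbhd (b : bool) (v : 'I_n) (B : {set 'I_n}) : {set 'I_n} :=
  [set w in B | g v w == b].

Lemma nbhdS b v (P Q : {set 'I_n}) : P \subset Q -> nbhd b v P \subset nbhd b v Q.
Proof.
by move=> PQ; apply/subsetP => w; rewrite !inE => /andP[/(subsetP PQ) -> ->].
Qed.

Lemma nbhd_sub b v (P : {set 'I_n}) : nbhd b v P \subset P.
Proof. by apply/subsetP => w; rewrite inE => /andP[]. Qed.

Lemma nbhdU b v (P Q : {set 'I_n}) : nbhd b v (P :|: Q) = nbhd b v P :|: nbhd b v Q.
Proof. by apply/setP => w; rewrite !inE andb_orl. Qed.

Lemma sum_card_nbhdC b (P Q : {set 'I_n}) :
  \sum_(v in P) #|nbhd b v Q| = \sum_(w in Q) #|nbhd b w P|.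
Proof.
rewrite [LHS](double_count _ _ (fun v w => g v w == b)).
by apply: eq_bigr => w _; apply: eq_card => v; rewrite !inE gsym.
Qed.

Definition embeds_in_blocks k (h : rel 'I_k) (W : 'I_k -> {set 'I_n}) : Prop :=
  exists2 phi : 'I_k -> 'I_n,
    forall j, phi j \in W j & forall u v, h u v = g (phi u) (phi v).

Lemma induced_sub_of_blocks k (h : rel 'I_k) W :
  ordered_blocks W -> embeds_in_blocks h W -> induced_ordered_sub h g.
Proof.
move=> ordW [phi phiW phiE]; exists phi; split=> // u v lt_uv.
exact: ordW lt_uv _ _ (phiW u) (phiW v).
Qed.

Lemma free_size_gt0 k (h : rel 'I_k) : ~ induced_ordered_sub h g -> 0 < k.
Proof.
case: k h => // h []; have phi : 'I_0 -> 'I_n by case.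
by exists phi; split; case.
Qed.

Lemma embeds_in_blocks_cons k (h : rel 'I_k.+1) (W : 'I_k.+1 -> {set 'I_n}) v
    (W' : 'I_k -> {set 'I_n}) :
  simple_graph h -> v \in W ord0 ->
  (forall j, W' j \subset nbhd (h ord0 (lift ord0 j)) v (W (lift ord0 j))) ->
  embeds_in_blocks (tail_rel h) W' -> embeds_in_blocks h W.
Proof.
move=> [hirr hsym] vW W'nbhd [phi phiW phiE].
have phi_nbhd j : phi j \in nbhd (h ord0 (lift ord0 j)) v (W (lift ord0 j)).
  exact: subsetP (W'nbhd j) _ (phiW j).
exists (fun i => if unlift ord0 i is Some j then phi j else v) => [i|x y].
  by case: unliftP => [j ->|-> //]; move: (phi_nbhd j); rewrite inE => /andP[].
case: unliftP => [i ->|->]; case: unliftP => [j ->|->]; rewrite ?hirr ?girr //.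
- exact: phiE.
- by move: (phi_nbhd i); rewrite inE hsym gsym => /andP[_ /eqP].
- by move: (phi_nbhd j); rewrite inE => /andP[_ /eqP].
Qed.

Section ThinPairs.
Variables (q a : nat) (X : {set 'I_n}).
Hypotheses (q_gt0 : 0 < q) (a_gt0 : 0 < a).

Definition thin_pair k (A B : {set 'I_n}) (b : bool) : Prop :=
  [/\ A :|: B \subset X, [disjoint A & B], #|B| <= k * #|A|, a <= #|B|
    & forall v, v \in A -> q * #|nbhd b v B| < #|B|].

Lemma embed_or_thin_pair k (h : rel 'I_k) (W : 'I_k -> {set 'I_n}) :
  simple_graph h -> ordered_blocks W -> (forall j, W j \subset X) ->
  (forall j, #|W j| = q ^ k * a) ->
  embeds_in_blocks h W \/ exists A B b, thin_pair k A B b.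
Proof.
elim: k h W => [|k IH] h W hs ordW WX cardW.
  left; have phi : 'I_0 -> 'I_n by case.
  by exists phi; case.
pose Wt j := W (lift ord0 j); pose ht j := h ord0 (lift ord0 j).
pose C v j := nbhd (ht j) v (Wt j).
pose F j := [set v in W ord0 | q * #|C v j| < #|Wt j|].
have cardWt j : #|Wt j| = #|W ord0| by rewrite /Wt !cardW.
(* Either a large part of the first block is badly connected to some later
   block, which is a thin pair, or some v in it is correctly adjacent to a 1/q
   fraction of every later block: map the first vertex of h to v and recurse on
   these fractions. *)
have FW0 j : F j \subset W ord0 by apply/subsetP => v; rewrite inE => /andP[].
have [j leWF|smallF] := pickP (fun j => #|W ord0| <= k * #|F j|).
  right; exists (F j), (Wt j), (ht j); split.
  - by rewrite subUset WX (subset_trans (FW0 j)).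
  - by apply: disjointWl (FW0 j) (@ordered_blocks_disjoint _ W ord0 (lift ord0 j) ordW _).
  - by rewrite cardWt (leq_trans leWF) // leq_mul2r leqnSn orbT.
  - by rewrite /Wt cardW leq_pmull // expn_gt0 q_gt0.
  - by move=> v; rewrite inE => /andP[].
have W0_gt0 : 0 < #|W ord0| by rewrite cardW muln_gt0 expn_gt0 q_gt0.
have [v vW vF] : exists2 v, v \in W ord0 & forall j, v \notin F j.
  by apply: exists_notin_bigcup => // j; rewrite card_ord ltnNge smallF.
have largeC j : q ^ k * a <= #|C v j|.
  by have := vF j; rewrite inE vW -leqNgt cardWt cardW expnS -mulnA leq_pmul2l.
pose W' j := take_set (q ^ k * a) (C v j).
have W'Wt j : W' j \subset Wt j := subset_trans (take_set_sub _ _) (nbhd_sub _ _ _).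
have [||||embW'|[A [B [b [ABX dAB leBA aB thinAB]]]]] := IH (tail_rel h) W'.
- exact: simple_graph_tail.
- move=> i j lt_ij x y /(subsetP (W'Wt i)) xW /(subsetP (W'Wt j)) yW.
  by apply: ordW xW yW; rewrite /= /bump !leq0n.
- by move=> j; apply: subset_trans (W'Wt j) (WX _).
- by move=> j; rewrite card_take_set.
- by left; apply: embeds_in_blocks_cons hs vW (fun j => take_set_sub _ _) embW'.
- right; exists A, B, b; split=> //.
  by apply: leq_trans leBA _; rewrite leq_mul2r leqnSn orbT.
Qed.

End ThinPairs.

Fixpoint sparse_chain (b : bool) (m : nat) (X : {set 'I_n}) (s : seq {set 'I_n}) : Prop :=
  if s is A :: s' then
    exists2 B, [/\ A :|: B \subset X, [disjoint A & B], m <= #|A|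
                 & forall v, v \in A -> #|nbhd b v B| < m]
             & sparse_chain b m B s'
  else True.

Lemma sparse_chain_sub b m (X Y : {set 'I_n}) s :
  X \subset Y -> sparse_chain b m X s -> sparse_chain b m Y s.
Proof.
case: s => //= A s XY [B [ABX dAB le_mA sparseAB] chB].
by exists B => //; split=> //; apply: subset_trans XY.
Qed.

Definition bdeg (b : bool) (U : {set 'I_n}) (v : 'I_n) : nat := #|nbhd b v (U :\ v)|.

Lemma bdegS b (P Q : {set 'I_n}) v : P \subset Q -> bdeg b P v <= bdeg b Q v.
Proof. by move=> PQ; apply/subset_leq_card/nbhdS/setSD. Qed.

Lemma bdeg_le_nbhd b (P : {set 'I_n}) v : bdeg b P v <= #|nbhd b v P|.
Proof. exact/subset_leq_card/nbhdS/subD1set. Qed.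

Lemma bdegU b (P Q : {set 'I_n}) v : bdeg b (P :|: Q) v <= bdeg b P v + bdeg b Q v.
Proof. by rewrite /bdeg setDUl nbhdU leq_card_setU. Qed.

Lemma bdeg_set1 b v : bdeg b [set v] v = 0.
Proof. by rewrite /bdeg setDv; apply/eqP; rewrite cards_eq0 -subset0 nbhd_sub. Qed.

Lemma bdeg_true (U : {set 'I_n}) v : bdeg true U v = deg_in g U v.
Proof.
apply: eq_card => w; rewrite !inE eqb_id.
by case: eqVneq => [->|]; rewrite ?girr ?andbF.
Qed.

Lemma bdeg_false (U : {set 'I_n}) v : bdeg false U v = codeg_in g U v.
Proof. by apply: eq_card => w; rewrite !inE eqbF_neg -andbA andbCA. Qed.

Lemma sum_bdeg_setU b m (A U : {set 'I_n}) :
  [disjoint A & U] -> #|A| <= m -> (forall v, v \in A -> #|nbhd b v U| < m) ->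
  \sum_(v in A :|: U) bdeg b (A :|: U) v <= \sum_(v in U) bdeg b U v + #|A| * (3 * m).
Proof.
move=> dAU le_Am sparseAU.
have sumA : \sum_(v in A) bdeg b (A :|: U) v <= #|A| * (2 * m).
  rewrite -sum_nat_const; apply: leq_sum => v vA.
  apply: leq_trans (bdegU _ _ _ _) _; rewrite mul2n -addnn leq_add //.
    apply: leq_trans (bdeg_le_nbhd _ _ _) (leq_trans _ le_Am).
    exact/subset_leq_card/nbhd_sub.
  exact/ltnW/(leq_ltn_trans (bdeg_le_nbhd _ _ _))/sparseAU.
have sumU : \sum_(v in U) bdeg b (A :|: U) v <= \sum_(v in U) bdeg b U v + #|A| * m.
  have /leq_trans -> // : \sum_(v in U) bdeg b (A :|: U) v <=
      \sum_(v in U) (#|nbhd b v A| + bdeg b U v).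
    apply: leq_sum => v _; apply: leq_trans (bdegU _ _ _ _) _.
    by rewrite leq_add2r bdeg_le_nbhd.
  rewrite big_split /= addnC leq_add2l sum_card_nbhdC -sum_nat_const.
  by apply: leq_sum => w /sparseAU/ltnW.
rewrite (eq_bigl [predU A & U]) => [|v]; last by rewrite !inE.
rewrite bigU //=; apply: leq_trans (leq_add sumA sumU) _.
by rewrite addnCA leq_add2l -mulnDr -mulSnr.
Qed.

Lemma low_bdeg_set_of_sparse_chain b m X s : sparse_chain b m X s ->
  exists U : {set 'I_n}, [/\ U \subset X, #|U| = size s * m
                          & \sum_(v in U) bdeg b U v <= #|U| * (3 * m)].
Proof.
elim: s X => [|A s IH] X /=; first by exists set0; rewrite sub0set cards0 big_set0.
case=> B [ABX dAB le_mA sparseAB] /IH[U [UB cardU sumU]].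
have A'A := take_set_sub m A; have cardA' := card_take_set le_mA.
have dA'U : [disjoint take_set m A & U] := disjointW A'A UB dAB.
exists (take_set m A :|: U).
rewrite cardsU (disjoint_setI0 dA'U) cards0 subn0 cardA' cardU; split=> //.
  by apply: subset_trans ABX; apply: setUSS.
apply: leq_trans (sum_bdeg_setU dA'U (eq_leq cardA') _) _.
  move=> v /(subsetP A'A) vA; apply: leq_ltn_trans (sparseAB v vA).
  exact/subset_leq_card/nbhdS.
by move: sumU; rewrite cardA' cardU; nia.
Qed.

Lemma low_bdeg_subset b (U : {set 'I_n}) d :
  \sum_(v in U) bdeg b U v <= #|U| * d ->
  exists2 U' : {set 'I_n}, #|U| <= 2 * #|U'| & forall v, v \in U' -> bdeg b U' v <= 2 * d.
Proof.
move=> sumU; pose Z := [set v in U | 2 * d < bdeg b U v].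
have ZU : Z \subset U by apply/subsetP => v; rewrite inE => /andP[].
have sumZ : #|Z| * (2 * d).+1 <= #|U| * d.
  apply: leq_trans sumU; rewrite -sum_nat_const.
  apply: leq_trans (_ : \sum_(v in Z) bdeg b U v <= _).
    by apply: leq_sum => v; rewrite inE => /andP[].
  by rewrite [leqRHS](big_setID Z) /= (setIidPr ZU) leq_addr.
exists (U :\: Z); first by rewrite cardsD (setIidPr ZU); nia.
move=> v; rewrite inE => /andP[vZ vU]; apply: leq_trans (bdegS _ _ (subsetDl U Z)) _.
by move: vZ; rewrite inE vU -leqNgt.
Qed.

Fixpoint sparse_chain_bound (k d : nat) : nat :=
  if d is d'.+1 then 2 * k * sparse_chain_bound k d' ^ k.+1 else 2 * k.

Lemma sparse_chain_bound_ge k d : 2 * k <= sparse_chain_bound k d.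
Proof.
elim: d => //= d IH; have [->|k_gt0] := posnP k; first exact: leq0n.
have R_gt0 : 0 < sparse_chain_bound k d by apply: leq_trans IH; rewrite muln_gt0.
apply: leq_trans IH _; rewrite expnS mulnCA leq_pmulr //.
by rewrite !muln_gt0 k_gt0 expn_gt0 R_gt0.
Qed.

Section Free.
Variables (k : nat) (h : rel 'I_k).
Hypotheses (hs : simple_graph h) (h_free : ~ induced_ordered_sub h g).

Lemma thin_pair_of_free q (X : {set 'I_n}) : 0 < q -> k * q ^ k <= #|X| ->
  exists A B b, thin_pair q (#|X| %/ (k * q ^ k)) X k A B b.
Proof.
move=> q_gt0 le_X.
have kq_gt0 : 0 < k * q ^ k by rewrite muln_gt0 (free_size_gt0 h_free) expn_gt0 q_gt0.
have [|W [ordW WX cardW]] := @ordered_blocks_of_set k (q ^ k * (#|X| %/ (k * q ^ k))) X.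
  by rewrite mulnA mulnC leq_trunc_div.
have a_gt0 : 0 < #|X| %/ (k * q ^ k) by rewrite divn_gt0.
have [emb|//] := embed_or_thin_pair q_gt0 a_gt0 hs ordW WX cardW.
by case: h_free; apply: induced_sub_of_blocks ordW emb.
Qed.

Definition has_sparse_chain d r1 r0 (X : {set 'I_n}) : Prop :=
  exists b m s, [/\ sparse_chain b m X s, size s = (if b then r1 else r0),
                    #|X| <= sparse_chain_bound k d * m & k * m <= #|X|].

Lemma has_sparse_chain_nil d r1 r0 (X : {set 'I_n}) : r1 = 0 \/ r0 = 0 ->
  sparse_chain_bound k d <= #|X| -> has_sparse_chain d r1 r0 X.
Proof.
move=> r_eq0 le_RX; have k_gt0 := free_size_gt0 h_free.
have le_kX : k <= #|X|.
  apply: leq_trans le_RX; apply: leq_trans (sparse_chain_bound_ge k d).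
  by rewrite leq_pmull.
have [b rb0] : exists b, (if b then r1 else r0) = 0.
  by case: r_eq0; [exists true | exists false].
exists b, (#|X| %/ k), [::]; split=> //; last by rewrite mulnC leq_trunc_div.
apply: leq_trans (leq_mul2_divn k_gt0 le_kX) _.
by rewrite leq_mul2r sparse_chain_bound_ge orbT.
Qed.

Lemma has_sparse_chain_of_free d r1 r0 (X : {set 'I_n}) : r1 + r0 = d ->
  sparse_chain_bound k d <= #|X| -> has_sparse_chain d r1 r0 X.
Proof.
elim: d r1 r0 X => [|d IH] r1 r0 X def_d le_RX.
  by apply: has_sparse_chain_nil le_RX; left; case: r1 def_d.
case: r1 def_d => [|r1] def_d; first by apply: has_sparse_chain_nil le_RX; left.
case: r0 def_d => [|r0] def_d; first by apply: has_sparse_chain_nil le_RX; right.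
(* Recurse into the B of a thin pair (A, B) of colour b: a chain of colour b
   found there extends by A, a chain of the other colour already lies in X. *)
set q := sparse_chain_bound k d; have k_gt0 := free_size_gt0 h_free.
have q_gt0 : 0 < q by apply: leq_trans (sparse_chain_bound_ge k d); rewrite muln_gt0.
have kq_gt0 : 0 < k * q ^ k by rewrite muln_gt0 k_gt0 expn_gt0 q_gt0.
have le_qX : 2 * (k * q ^ k) * q <= #|X|.
  by apply: leq_trans le_RX; rewrite /= -/q expnSr !mulnA.
have le_kqX : k * q ^ k <= #|X|.
  by apply: leq_trans le_qX; rewrite -mulnA mulnCA leq_pmulr // muln_gt0 q_gt0.
have [A [B [b [ABX dAB le_BA le_aB thinAB]]]] := thin_pair_of_free q_gt0 le_kqX.
have le_XB : #|X| <= 2 * (k * q ^ k) * #|B|.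
  by apply: leq_trans (leq_mul2_divn kq_gt0 le_kqX) _; rewrite leq_mul2l le_aB orbT.
have le_qB : q <= #|B|.
  rewrite -(@leq_pmul2l (2 * (k * q ^ k))); last by rewrite muln_gt0 kq_gt0.
  exact: leq_trans le_qX le_XB.
have [|b' [m [s [chB size_s le_Bm le_kmB]]]] :=
  IH (if b then r1 else r1.+1) (if b then r0.+1 else r0) B _ le_qB.
  by case: (b); lia.
have BX : B \subset X := subset_trans (subsetUr A B) ABX.
have le_Xm : #|X| <= sparse_chain_bound k d.+1 * m.
  apply: leq_trans le_XB _; rewrite /= -/q expnSr.
  by rewrite !mulnA -!(mulnA (2 * k * q ^ k)) leq_mul2l le_Bm orbT.
have le_kmX : k * m <= #|X| := leq_trans le_kmB (subset_leq_card BX).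
case: (eqVneq b' b) => [eq_b'b|neq_b'b]; last first.
  exists b', m, s; split=> //; first exact: sparse_chain_sub BX chB.
  by rewrite size_s; move: neq_b'b; case: (b'); case: (b).
subst b'; exists b, m, (A :: s); split=> //=; last by rewrite size_s; case: (b).
exists B => //.
split=> //; first by rewrite -(leq_pmul2l k_gt0) (leq_trans le_kmB).
move=> v vA; rewrite -(ltn_pmul2l q_gt0); exact: leq_trans (thinAB v vA) le_Bm.
Qed.

Lemma homogeneous_subset_of_free D : 0 < D ->
  exists b (U : {set 'I_n}),
    n <= sparse_chain_bound k (24 * D) * #|U| /\
    forall v, v \in U -> D * bdeg b U v <= #|U|.
Proof.
move=> D_gt0; have [lt_nN|] := ltnP n (sparse_chain_bound k (24 * D)).
  have [n0|n_gt0] := posnP n.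
    by exists true, set0; split=> [|v]; rewrite ?inE // n0.
  exists true, [set Ordinal n_gt0]; rewrite cards1 muln1 ltnW //; split=> // v.
  by rewrite inE => /eqP ->; rewrite bdeg_set1 muln0.
rewrite -[n in _ <= n]card_ord -cardsT => le_NT.
have [|b [m [s [chT size_s le_Tm _]]]] :=
  has_sparse_chain_of_free (r1 := 12 * D) (r0 := 12 * D) _ le_NT.
  by rewrite -mulnDl.
(* 12D blocks of size m have average b-degree at most 3m, and Markov keeps
   at least 6Dm of their vertices with b-degree at most 6m. *)
have {}size_s : size s = 12 * D by case: (b) size_s.
have [U [_ cardU sumU]] := low_bdeg_set_of_sparse_chain chT.
have [U' le_UU' degU'] := low_bdeg_subset sumU.
have le_mU' : 6 * D * m <= #|U'| by move: le_UU'; rewrite cardU size_s; lia.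
exists b, U'; split.
  rewrite cardsT card_ord in le_Tm; apply: leq_trans le_Tm _.
  by rewrite leq_mul2l (leq_trans _ le_mU') ?orbT // leq_pmull // muln_gt0 D_gt0.
move=> v /degU' le_deg; apply: leq_trans le_mU'.
by rewrite mulnC mulnAC leq_mul2r (leq_trans le_deg) ?orbT // mulnA.
Qed.

End Free.

End Graph.

Local Open Scope ring_scope.

Lemma maxdeg_or_comaxdeg (R : realType) n (g : rel 'I_n) b (U : {set 'I_n}) (d : R) :
  irreflexive g -> (forall v, v \in U -> (bdeg g b U v)%:R <= d) ->
  maxdeg_le g U d \/ comaxdeg_le g U d.
Proof.
move=> girr; case: b => degU; [left|right] => v /degU;
  by rewrite ?bdeg_true ?bdeg_false.
Qed.

Lemma exists_nat_mul_ge1 (R : archiFieldType) (delta : R) :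
  0 < delta -> exists2 D : nat, (0 < D)%N & 1 <= delta * D%:R.
Proof.
move=> delta_gt0; have inv_gt0 : 0 < delta^-1 by rewrite invr_gt0.
have lt_inv_bound := archi_boundP (ltW inv_gt0).
exists (Num.bound delta^-1); first by rewrite -(ltr0n R) (lt_trans inv_gt0).
by rewrite -[leLHS](mulfV (lt0r_neq0 delta_gt0)) ler_pM2l // ltW.
Qed.

Theorem corollary12 (R : realType) (k : nat) (h : rel 'I_k)
    (Hh : simple_graph h) (delta : R) (Hdelta : 0 < delta) :
  exists c2 : R, 0 < c2 /\
    forall (n : nat) (g : rel 'I_n), simple_graph g ->
      ~ induced_ordered_sub h g ->
      exists U : {set 'I_n},
        c2 * n%:R <= #|U|%:R /\
        (maxdeg_le g U (delta * #|U|%:R) \/ comaxdeg_le g U (delta * #|U|%:R)).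
Proof.
have [k0|k_gt0] := posnP k.
  by exists 1; split=> // n g _ /free_size_gt0; rewrite k0.
have [D D_gt0 le1_deltaD] := exists_nat_mul_ge1 Hdelta.
pose N := sparse_chain_bound k (24 * D).
have N_gt0 : (0 < N)%N.
  by apply: leq_trans (sparse_chain_bound_ge k _); rewrite muln_gt0 k_gt0.
exists N%:R^-1; split=> [|n g [girr gsym] h_free]; first by rewrite invr_gt0 ltr0n.
have [b [U [le_nNU degU]]] := homogeneous_subset_of_free girr gsym Hh h_free D_gt0.
exists U; split.
  by rewrite ler_pdivrMl ?ltr0n // -natrM ler_nat.
apply: (maxdeg_or_comaxdeg (b := b)) => // v vU.
apply: le_trans (_ : _ <= delta * (D * bdeg g b U v)%:R) _.
  by rewrite natrM mulrA mulrC ler_peMr ?ler0n.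
by rewrite ler_pM2l // ler_nat degU.
Qed.
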